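(* There is an absolute constant $C$ such that for every odd prime $p$ and every integer $n\ge2$, if $D$ and $X$ are independent and uniform on $\{0,1\}^{n-1}$ and $S=\sum_{i=1}^{n-1}X_i(-1)^{h(D)_i}$, then $$\mathbb{E}\big[q_p(S)\big]\le\tfrac12-\tfrac1\pi+\tfrac1{2p}+Cp^{3/2}e^{-n/(4p^2)},$$ where for an integer $k$, $q_p(k)=\sin^2(-\tfrac\pi4+\tfrac\pi pk)$ if $(k\bmod p)<p/2$ and $q_p(k)=\cos^2(-\tfrac\pi4+\tfrac\pi pk)$ otherwise.
   Context: $k\bmod p\in\{0,\dots,p-1\}$. Binary tree $B_n$: vertices $v_0,\dots,v_{n-1}$, root $v_0$; for $i\ge1$ the parent of $v_i$ is $v_{\lfloor(i-1)/2\rfloor}$ and $e_i$ joins $v_i$ to its parent. For $d\in\{0,1\}^{n-1}$, $h(d)_i=\bigoplus_{j:\,e_j\text{ on the path from }v_0\text{ to }v_i}d_j$. *)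

From Stdlib Require Import Reals ZArith Znumtheory List Lia.
Open Scope R_scope.

Fixpoint all_bits (m : nat) : list (list bool) :=
  match m with
  | O => nil :: nil
  | S m' => flat_map (fun l => (false :: l) :: (true :: l) :: nil) (all_bits m')
  end.

(* Edge label d_j (1 <= j <= n-1) of the vector d = [d_1; ...; d_{n-1}]. *)
Definition bit (d : list bool) (j : nat) : bool := nth (j - 1) d false.

(* h(d)_i : xor of d_j over edges e_j on the path from v_0 to v_i in B_n.
   Parent of v_i (i >= 1) is v_{(i-1)/2}. Fuel i suffices since the parent index is < i. *)
Fixpoint h_fuel (fuel : nat) (d : list bool) (i : nat) : bool :=
  match fuel with
  | O => false
  | S f => match i with
           | O => false
           | S _ => xorb (bit d i) (h_fuel f d (Nat.div (i - 1) 2))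
           end
  end.
Definition h (d : list bool) (i : nat) : bool := h_fuel i d i.

Definition S_val (n : nat) (d x : list bool) : Z :=
  fold_right Z.add 0%Z
    (map (fun i => (if bit x i then 1 else 0) * (if h d i then -1 else 1))%Z
         (seq 1 (n - 1))).

Definition q (p k : Z) : R :=
  if Rlt_dec (IZR (Z.modulo k p)) (IZR p / 2)
  then (sin (- (PI / 4) + PI / IZR p * IZR k)) ^ 2
  else (cos (- (PI / 4) + PI / IZR p * IZR k)) ^ 2.

Definition sumR (l : list R) : R := fold_right Rplus 0 l.

Definition expect_q (p : Z) (n : nat) : R :=
  sumR (flat_map (fun d => map (fun x => q p (S_val n d x)) (all_bits (n - 1)))
                 (all_bits (n - 1)))
  / (2 ^ (n - 1) * 2 ^ (n - 1)).

From Stdlib Require Import Reals ZArith Znumtheory List Lia Lra.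
Open Scope R_scope.

(* For a fixed tree labelling D = d, the sum S is the endpoint of a lazy walk on Z whose i-th
   step is 0 or (-1)^(h(d)_i), each with probability 1/2; the tree only enters through these
   signs. Averaging a p-periodic F over one step is the operator F |-> (F + F(. + e))/2 with
   e = +-1. It preserves the mean of F over a period and, by the discrete Poincare inequality on
   Z/p (sum of squares of a mean-zero g is at most p^2/2 times its Dirichlet energy), contracts
   the variance by 1 - 1/(2p^2). So E[q_p(S) | D = d] is within sqrt(p) e^(-(n-1)/(4p^2)) of the
   period mean of q_p, which telescoping the product-to-sum formula evaluates to
   1/2 - cot(pi/(2p))/(2p) <= 1/2 - 1/pi + 1/(2p). *)

Fixpoint sumN (f : nat -> R) (n : nat) : R :=
  match n with O => 0 | S n' => sumN f n' + f n' end.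

Lemma sumN_ext f g n : (forall r, (r < n)%nat -> f r = g r) -> sumN f n = sumN g n.
Proof.
  induction n as [|n IH]; intros Hfg; simpl; [reflexivity|].
  rewrite IH, (Hfg n); [reflexivity|lia|intros; apply Hfg; lia].
Qed.

Lemma sumN_add f g n : sumN (fun r => f r + g r) n = sumN f n + sumN g n.
Proof. induction n as [|n IH]; simpl; [ring|rewrite IH; ring]. Qed.

Lemma sumN_scal c f n : sumN (fun r => c * f r) n = c * sumN f n.
Proof. induction n as [|n IH]; simpl; [ring|rewrite IH; ring]. Qed.

Lemma sumN_const c n : sumN (fun _ => c) n = INR n * c.
Proof. induction n as [|n IH]; simpl sumN; [simpl; ring|rewrite IH, S_INR; ring]. Qed.

Lemma sumN_le f g n : (forall r, (r < n)%nat -> f r <= g r) -> sumN f n <= sumN g n.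
Proof.
  induction n as [|n IH]; intros Hfg; simpl; [lra|].
  apply Rplus_le_compat; [apply IH; intros; apply Hfg|apply Hfg]; lia.
Qed.

Lemma sumN_nonneg f n : (forall r, (r < n)%nat -> 0 <= f r) -> 0 <= sumN f n.
Proof. intros Hf. rewrite <- (Rmult_0_r (INR n)), <- sumN_const. now apply sumN_le. Qed.

Lemma sumN_le_n f m n : (forall r, 0 <= f r) -> (m <= n)%nat -> sumN f m <= sumN f n.
Proof. intros Hf Hmn. induction Hmn as [|n _ IH]; simpl; [lra|specialize (Hf n); lra]. Qed.

Lemma sumN_term_le f i n : (forall r, 0 <= f r) -> (i < n)%nat -> f i <= sumN f n.
Proof.
  intros Hf Hi. apply Rle_trans with (sumN f (S i)); [|now apply sumN_le_n].
  simpl. pose proof (sumN_nonneg f i (fun r _ => Hf r)). lra.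
Qed.

Lemma sumN_shift a n : sumN (fun r => a (S r)) n + a O = sumN a n + a n.
Proof. induction n as [|n IH]; simpl; lra. Qed.

Lemma sumN_telescope u n : sumN (fun r => u (S r) - u r) n = u n - u O.
Proof. induction n as [|n IH]; simpl; [ring|rewrite IH; ring]. Qed.

Lemma sumN_INR n : sumN INR n = INR n * (INR n - 1) / 2.
Proof. induction n as [|n IH]; simpl sumN; [simpl; field|rewrite IH, S_INR; field]. Qed.

Lemma sumN_sq_le a n : sumN a n ^ 2 <= INR n * sumN (fun r => a r ^ 2) n.
Proof.
  induction n as [|n IH]; [simpl; lra|].
  destruct n as [|n]; [simpl; lra|].
  cbn [sumN] in *. rewrite S_INR.
  set (s := sumN a n + a n) in *. set (Q := sumN _ n + a n ^ 2) in *.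
  set (k := INR (S n)) in *. set (b := a (S n)).
  assert (Hk : 0 < k) by apply lt_0_INR, Nat.lt_0_succ.
  pose proof (pow2_ge_0 (s - k * b)).
  assert (Hcross : 2 * s * b <= Q + k * b ^ 2) by (apply Rmult_le_reg_l with k; nra).
  nra.
Qed.

Section PeriodicFunctions.

Variable P : nat.

Definition periodic (F : Z -> R) : Prop := forall z, F (z + Z.of_nat P)%Z = F z.

Definition sumP (F : Z -> R) : R := sumN (fun r => F (Z.of_nat r)) P.

Definition pmean (F : Z -> R) : R := sumP F / INR P.

Definition pvar (F : Z -> R) : R := sumP (fun z => (F z - pmean F) ^ 2).

Definition rho : R := 1 - 1 / (2 * INR P ^ 2).

Definition lazy_step (e : Z) (F : Z -> R) (z : Z) : R := (F z + F (z + e)%Z) / 2.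

Lemma sumP_ext F G : (forall z, F z = G z) -> sumP F = sumP G.
Proof. intros HFG. apply sumN_ext. intros; apply HFG. Qed.

Lemma sumP_add F G : sumP (fun z => F z + G z) = sumP F + sumP G.
Proof. apply sumN_add. Qed.

Lemma sumP_scal c F : sumP (fun z => c * F z) = c * sumP F.
Proof. apply sumN_scal. Qed.

Lemma sumP_shift_succ F : periodic F -> sumP (fun z => F (z + 1)%Z) = sumP F.
Proof.
  intros HF. unfold sumP.
  pose proof (sumN_shift (fun r => F (Z.of_nat r)) P) as Hshift.
  assert (Hwrap : F (Z.of_nat P) = F (Z.of_nat 0)) by (rewrite <- (HF (Z.of_nat 0)); f_equal).
  rewrite (sumN_ext _ (fun r => F (Z.of_nat (S r)))) by (intros; f_equal; lia).
  lra.
Qed.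

Lemma sumP_shift_unit F e :
  periodic F -> (e = 1 \/ e = -1)%Z -> sumP (fun z => F (z + e)%Z) = sumP F.
Proof.
  intros HF [-> | ->]; [now apply sumP_shift_succ|].
  set (G z := F (z + -1)%Z).
  assert (HG : periodic G) by (intros z; unfold G; rewrite <- (HF (z + -1)%Z); f_equal; lia).
  rewrite <- (sumP_shift_succ G HG). apply sumP_ext. intros z; unfold G; f_equal; lia.
Qed.

Lemma discrete_poincare g : sumP g = 0 ->
  sumP (fun z => g z ^ 2) <= INR P ^ 2 / 2 * sumP (fun z => (g (z + 1)%Z - g z) ^ 2).
Proof.
  intros Hg0. unfold sumP in *. set (c := g 0%Z).
  set (D := sumN (fun r => (g (Z.of_nat r + 1)%Z - g (Z.of_nat r)) ^ 2) P).
  assert (HD : 0 <= D) by (apply sumN_nonneg; intros; apply pow2_ge_0).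
  assert (Hcentered : sumN (fun r => (g (Z.of_nat r) - c) ^ 2) P
                      = sumN (fun r => g (Z.of_nat r) ^ 2) P + INR P * c ^ 2).
  { rewrite (sumN_ext _ (fun r => g (Z.of_nat r) ^ 2 + (-2 * c * g (Z.of_nat r) + c ^ 2)))
      by (intros; ring).
    rewrite !sumN_add, sumN_scal, sumN_const, Hg0. ring. }
  (* each deviation from g 0 is a telescoping sum of at most P increments *)
  assert (Hdev : forall r, (r < P)%nat -> (g (Z.of_nat r) - c) ^ 2 <= INR r * D).
  { intros r Hr. change c with (g (Z.of_nat 0)).
    rewrite <- (sumN_telescope (fun k => g (Z.of_nat k)) r).
    eapply Rle_trans; [apply sumN_sq_le|]. apply Rmult_le_compat_l; [apply pos_INR|].
    eapply Rle_trans; [|apply (sumN_le_n _ r P); [intros; apply pow2_ge_0|lia]].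
    right. apply sumN_ext. intros k _.
    replace (Z.of_nat (S k)) with (Z.of_nat k + 1)%Z by lia. reflexivity. }
  pose proof (sumN_le _ _ _ Hdev) as Hsum.
  rewrite Hcentered, (sumN_ext (fun r => INR r * D) (fun r => D * INR r)), sumN_scal,
    sumN_INR in Hsum by (intros; ring).
  pose proof (pos_INR P). pose proof (pow2_ge_0 c). nra.
Qed.

Lemma periodic_lazy_step e F : periodic F -> periodic (lazy_step e F).
Proof.
  intros HF z. unfold lazy_step.
  replace (z + Z.of_nat P + e)%Z with (z + e + Z.of_nat P)%Z by lia. now rewrite !HF.
Qed.

Lemma pmean_lazy_step e F :
  periodic F -> (e = 1 \/ e = -1)%Z -> pmean (lazy_step e F) = pmean F.
Proof.
  intros HF He. unfold pmean, lazy_step. f_equal.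
  rewrite (sumP_ext _ (fun z => /2 * F z + /2 * F (z + e)%Z)) by (intros; field).
  rewrite sumP_add, !sumP_scal, sumP_shift_unit by assumption. field.
Qed.

Lemma sumP_lazy_step_sq g e : periodic g -> (e = 1 \/ e = -1)%Z ->
  sumP (fun z => lazy_step e g z ^ 2)
  = sumP (fun z => g z ^ 2) - sumP (fun z => (g (z + 1)%Z - g z) ^ 2) / 4.
Proof.
  intros Hg He.
  assert (Hdirichlet : sumP (fun z => (g (z + e)%Z - g z) ^ 2)
                       = sumP (fun z => (g (z + 1)%Z - g z) ^ 2)).
  { destruct He as [-> | ->]; [reflexivity|].
    set (G z := (g (z + 1)%Z - g z) ^ 2).
    assert (HG : periodic G).
    { intros z. unfold G. replace (z + Z.of_nat P + 1)%Z with (z + 1 + Z.of_nat P)%Z by lia.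
      now rewrite !Hg. }
    rewrite <- (sumP_shift_unit G (-1) HG) by auto. apply sumP_ext. intros z. unfold G.
    replace (z + -1 + 1)%Z with z by lia. ring. }
  unfold lazy_step.
  rewrite (sumP_ext _ (fun z => /2 * g z ^ 2
                          + (/2 * g (z + e)%Z ^ 2 + - / 4 * (g (z + e)%Z - g z) ^ 2)))
    by (intros; field).
  rewrite !sumP_add, !sumP_scal, Hdirichlet.
  rewrite (sumP_shift_unit (fun z => g z ^ 2)) by (auto; intros z; now rewrite Hg).
  field.
Qed.

Hypothesis P_pos : (1 <= P)%nat.

Lemma INR_P_ge1 : 1 <= INR P.
Proof. apply (le_INR 1), P_pos. Qed.

Lemma rho_nonneg : 0 <= rho.
Proof.
  unfold rho. pose proof INR_P_ge1.
  assert (1 / (2 * INR P ^ 2) <= 1 / 2) by (apply Rmult_le_compat_l, Rinv_le_contravar; nra).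
  lra.
Qed.

Lemma sumP_sub_pmean F : sumP (fun z => F z - pmean F) = 0.
Proof.
  rewrite (sumP_ext _ (fun z => F z + - pmean F * 1)), sumP_add, sumP_scal by (intros; ring).
  unfold sumP at 2. rewrite sumN_const. unfold pmean. pose proof INR_P_ge1. field. lra.
Qed.

Lemma lazy_step_contraction g e : periodic g -> sumP g = 0 -> (e = 1 \/ e = -1)%Z ->
  sumP (fun z => lazy_step e g z ^ 2) <= rho * sumP (fun z => g z ^ 2).
Proof.
  intros Hg Hg0 He. rewrite sumP_lazy_step_sq by assumption.
  pose proof (discrete_poincare g Hg0) as Hpoinc. unfold rho.
  set (N := sumP (fun z => g z ^ 2)) in *.
  set (D := sumP (fun z => (g (z + 1)%Z - g z) ^ 2)) in *.
  pose proof INR_P_ge1. assert (Hp2 : 0 < 2 * INR P ^ 2) by nra.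
  assert (N / (2 * INR P ^ 2) <= D / 4).
  { apply Rle_trans with (INR P ^ 2 / 2 * D / (2 * INR P ^ 2)).
    - apply Rmult_le_compat_r; [left; now apply Rinv_0_lt_compat|assumption].
    - right. field. lra. }
  lra.
Qed.

Lemma pvar_lazy_step e F : periodic F -> (e = 1 \/ e = -1)%Z ->
  pvar (lazy_step e F) <= rho * pvar F.
Proof.
  intros HF He. unfold pvar. rewrite pmean_lazy_step by assumption.
  set (g z := F z - pmean F).
  assert (Hg : periodic g) by (intros z; unfold g; now rewrite HF).
  rewrite (sumP_ext _ (fun z => lazy_step e g z ^ 2)) by (intros; unfold lazy_step, g; field).
  apply lazy_step_contraction; [assumption|apply sumP_sub_pmean|assumption].
Qed.

End PeriodicFunctions.

Definition walk_pos (s : nat -> Z) (m : nat) (x : list bool) : Z :=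
  fold_right Z.add 0%Z (map (fun i => ((if bit x i then 1 else 0) * s i)%Z) (seq 1 m)).

Definition walk_sum (s : nat -> Z) (m : nat) (F : Z -> R) : R :=
  sumR (map (fun x => F (walk_pos s m x)) (all_bits m)).

Lemma walk_pos_cons s m b x :
  walk_pos s (S m) (b :: x)
  = ((if b then 1 else 0) * s 1%nat + walk_pos (fun i => s (S i)) m x)%Z.
Proof.
  unfold walk_pos. cbn [seq map fold_right]. f_equal.
  rewrite <- seq_shift, map_map. f_equal. apply map_ext_in. intros i Hi.
  apply in_seq in Hi. unfold bit. now replace (S i - 1)%nat with (S (i - 1)) by lia.
Qed.

Lemma sumR_map_pairs (f : list bool -> R) a b (L : list (list bool)) :
  sumR (map f (flat_map (fun l => a l :: b l :: nil) L))
  = sumR (map (fun l => f (a l) + f (b l)) L).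
Proof. induction L as [|l L IH]; simpl; [reflexivity|rewrite IH; ring]. Qed.

Lemma sumR_map_scal c (f : list bool -> R) L :
  sumR (map (fun x => c * f x) L) = c * sumR (map f L).
Proof. induction L as [|l L IH]; simpl; [ring|rewrite IH; ring]. Qed.

(* Conditioning on the first bit. *)
Lemma walk_sum_succ s m F :
  walk_sum s (S m) F = 2 * walk_sum (fun i => s (S i)) m (lazy_step (s 1%nat) F).
Proof.
  unfold walk_sum. cbn [all_bits]. rewrite sumR_map_pairs, <- sumR_map_scal. f_equal.
  apply map_ext. intros x. rewrite !walk_pos_cons. unfold lazy_step.
  rewrite Z.mul_0_l, Z.add_0_l, Z.mul_1_l, Z.add_comm. field.
Qed.

Lemma walk_average_deviation P s m F : (1 <= P)%nat -> periodic P F ->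
  (forall i, s i = 1 \/ s i = -1)%Z ->
  (walk_sum s m F / 2 ^ m - pmean P F) ^ 2 <= rho P ^ m * pvar P F.
Proof.
  intros HP. revert s F. induction m as [|m IH]; intros s F HF Hs.
  - unfold walk_sum, walk_pos. cbn. rewrite Rmult_1_l.
    replace ((F 0%Z + 0) / 1) with (F (Z.of_nat 0)) by (simpl; field).
    apply (sumN_term_le (fun r => (F (Z.of_nat r) - pmean P F) ^ 2));
      [intros; apply pow2_ge_0|lia].
  - rewrite walk_sum_succ.
    specialize (IH _ _ (periodic_lazy_step P (s 1%nat) F HF) (fun i => Hs (S i))).
    rewrite pmean_lazy_step in IH by auto.
    replace (2 * walk_sum _ m _ / 2 ^ S m)
      with (walk_sum (fun i => s (S i)) m (lazy_step (s 1%nat) F) / 2 ^ m)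
      by (simpl; field; apply pow_nonzero; lra).
    eapply Rle_trans; [exact IH|]. rewrite <- tech_pow_Rmult, (Rmult_comm (rho P)), Rmult_assoc.
    apply Rmult_le_compat_l; [apply pow_le, rho_nonneg; assumption|].
    apply pvar_lazy_step; auto.
Qed.

Lemma q_range p z : 0 <= q p z <= 1.
Proof.
  unfold q. destruct Rlt_dec;
    [pose proof (SIN_bound (- (PI / 4) + PI / IZR p * IZR z))
    |pose proof (COS_bound (- (PI / 4) + PI / IZR p * IZR z))];
    split; [apply pow2_ge_0|simpl; nra|apply pow2_ge_0|simpl; nra].
Qed.

Lemma q_periodic P : (1 <= P)%nat -> periodic P (q (Z.of_nat P)).
Proof.
  intros HP z. unfold q.
  replace ((z + Z.of_nat P) mod Z.of_nat P)%Z with (z mod Z.of_nat P)%Z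
    by (rewrite <- (Z_mod_plus_full z 1); f_equal; ring).
  assert (IZR (Z.of_nat P) <> 0) by (rewrite <- INR_IZR_INZ; apply not_0_INR; lia).
  replace (- (PI / 4) + PI / IZR (Z.of_nat P) * IZR (z + Z.of_nat P))
    with ((- (PI / 4) + PI / IZR (Z.of_nat P) * IZR z) + PI) by (rewrite plus_IZR; field; auto).
  rewrite neg_sin, neg_cos. destruct Rlt_dec; ring.
Qed.

Lemma pvar_le_of_unit_interval P F :
  (1 <= P)%nat -> (forall z, 0 <= F z <= 1) -> pvar P F <= INR P.
Proof.
  intros HP HF. pose proof (INR_P_ge1 P HP).
  assert (Hmean : 0 <= pmean P F <= 1).
  { unfold pmean, Rdiv. split.
    - apply Rmult_le_pos; [apply sumN_nonneg; intros; apply HF|left; apply Rinv_0_lt_compat; lra].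
    - apply Rmult_le_reg_r with (INR P); [lra|].
      rewrite Rmult_assoc, Rinv_l, Rmult_1_r, Rmult_1_l, <- (Rmult_1_r (INR P)), <- sumN_const
        by lra.
      apply sumN_le. intros; apply HF. }
  unfold pvar, sumP. rewrite <- (Rmult_1_r (INR P)), <- sumN_const.
  apply sumN_le. intros r _. pose proof (HF (Z.of_nat r)). simpl. nra.
Qed.

Lemma sin_sq_shift t : sin (- (PI / 4) + t) ^ 2 = (1 - sin (2 * t)) / 2.
Proof.
  assert (Hc : cos (2 * (- (PI / 4) + t)) = sin (2 * t)).
  { replace (2 * (- (PI / 4) + t)) with (- (PI / 2 - 2 * t)) by field.
    now rewrite cos_neg, cos_shift. }
  rewrite cos_2a_sin in Hc. simpl. lra.
Qed.

Lemma cos_sq_shift t : cos (- (PI / 4) + t) ^ 2 = (1 + sin (2 * t)) / 2.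
Proof.
  assert (Hc : cos (2 * (- (PI / 4) + t)) = sin (2 * t)).
  { replace (2 * (- (PI / 4) + t)) with (- (PI / 2 - 2 * t)) by field.
    now rewrite cos_neg, cos_shift. }
  rewrite cos_2a_cos in Hc. simpl. lra.
Qed.

Definition half_sign (K r : nat) : R := if (r <=? K)%nat then 1 else -1.

Lemma q_on_period K r : (r < 2 * K + 1)%nat ->
  q (Z.of_nat (2 * K + 1)) (Z.of_nat r)
  = 1 / 2 - half_sign K r * sin (2 * (PI / INR (2 * K + 1)) * INR r) / 2.
Proof.
  intros Hr. unfold q. rewrite Z.mod_small by lia. rewrite <- !INR_IZR_INZ.
  replace (2 * (PI / INR (2 * K + 1)) * INR r) with (2 * (PI / INR (2 * K + 1) * INR r)) by ring.
  rewrite plus_INR, mult_INR. simpl (INR 2). simpl (INR 1).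
  unfold half_sign. destruct (Nat.leb_spec r K) as [HrK|HrK];
    apply le_INR in HrK; rewrite ?S_INR in HrK;
    destruct Rlt_dec; try lra.
  - rewrite sin_sq_shift. field.
  - rewrite cos_sq_shift. field.
Qed.

Lemma sumN_half_sign_telescope K u n :
  sumN (fun r => half_sign K r * (u r - u (S r))) n
  = if (n <=? K + 1)%nat then u O - u n else u O - 2 * u (K + 1)%nat + u n.
Proof.
  induction n as [|n IH]; cbn [sumN]; [simpl; ring|]. rewrite IH. unfold half_sign.
  destruct (Nat.leb_spec n (K + 1)), (Nat.leb_spec (S n) (K + 1)), (Nat.leb_spec n K);
    try lia; try ring.
  replace n with (K + 1)%nat by lia. ring.
Qed.

(* Product-to-sum turns [2 sin b sin (2 b r)] into [cos ((2r-1)b) - cos ((2r+1)b)], and the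
   signed sum telescopes to [cos b - 2 cos PI + cos (2 PI - b)]. *)
Lemma half_sign_sine_sum K : (1 <= K)%nat ->
  let b := PI / INR (2 * K + 1) in
  sumN (fun r => half_sign K r * sin (2 * b * INR r)) (2 * K + 1) * sin b = 1 + cos b.
Proof.
  intros HK b. set (c j := cos (b * (2 * INR j - 1))).
  assert (Hstep : forall r, 2 * sin b * sin (2 * b * INR r) = c r - c (S r)).
  { intros r. unfold c. rewrite S_INR.
    replace (b * (2 * INR r - 1)) with (2 * b * INR r - b) by ring.
    replace (b * (2 * (INR r + 1) - 1)) with (2 * b * INR r + b) by ring.
    rewrite cos_minus, cos_plus. ring. }
  rewrite Rmult_comm, <- sumN_scal.
  rewrite (sumN_ext _ (fun r => / 2 * (half_sign K r * (c r - c (S r)))))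
    by (intros r _; rewrite <- Hstep; field).
  rewrite sumN_scal, sumN_half_sign_telescope.
  destruct (Nat.leb_spec (2 * K + 1) (K + 1)); [lia|].
  assert (HP : INR (2 * K + 1) = 2 * INR K + 1) by (rewrite plus_INR, mult_INR; simpl; ring).
  assert (Hb : b * (2 * INR K + 1) = PI).
  { unfold b. rewrite HP. field. pose proof (pos_INR K). lra. }
  unfold c. rewrite HP, plus_INR. simpl (INR 0); simpl (INR 1).
  replace (b * (2 * 0 - 1)) with (- b) by ring.
  replace (b * (2 * (INR K + 1) - 1)) with PI by lra.
  replace (b * (2 * (2 * INR K + 1) - 1)) with (- b + 2 * INR 1 * PI) by (simpl; lra).
  rewrite cos_period, cos_neg, cos_PI. field.
Qed.

Lemma cos_ge_1_sub_half_sq a : - PI / 2 <= a -> a <= PI / 2 -> 1 - a ^ 2 / 2 <= cos a.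
Proof.
  intros Hl Hu. destruct (cos_bound a 0 Hl Hu) as [Hlb _].
  replace (cos_approx a (2 * 0 + 1)) with (1 - a ^ 2 / 2) in Hlb; [lra|].
  unfold cos_approx, cos_term. simpl. field.
Qed.

Lemma pmean_q_le K : (1 <= K)%nat ->
  pmean (2 * K + 1) (q (Z.of_nat (2 * K + 1))) <= 1 / 2 - 1 / PI + 1 / (2 * INR (2 * K + 1)).
Proof.
  intros HK. pose proof (half_sign_sine_sum K HK) as HT. cbv zeta in HT.
  set (P := (2 * K + 1)%nat) in *. set (b := PI / INR P) in *.
  set (T := sumN _ P) in HT.
  assert (HP : 3 <= INR P).
  { unfold P. rewrite plus_INR, mult_INR. apply (le_INR 1) in HK. simpl in *. lra. }
  pose proof PI_RGT_0. pose proof PI_4.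
  assert (Hb : 0 < b <= PI / 3).
  { unfold b. split; [apply Rdiv_lt_0_compat; lra|].
    apply Rmult_le_compat_l, Rinv_le_contravar; lra. }
  assert (Hsin : 0 < sin b < b) by (split; [apply sin_gt_0|apply sin_lt_x]; lra).
  pose proof (cos_ge_1_sub_half_sq b ltac:(lra) ltac:(lra)).
  pose proof (COS_bound b).
  (* [T b >= T sin b = 1 + cos b >= 2 - b], i.e. [T >= 2 P / PI - 1]. *)
  assert (HT0 : 0 <= T) by nra.
  assert (HTb : T * b >= 2 - b) by nra.
  assert (Hsum : sumP P (q (Z.of_nat P)) = INR P / 2 - T / 2).
  { unfold sumP. rewrite (sumN_ext _ (fun r => - / 2 * (half_sign K r * sin (2 * b * INR r))
                                               + / 2 * 1)).
    - rewrite sumN_add, sumN_scal, sumN_scal, sumN_const. unfold T. field.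
    - intros r Hr. unfold P. rewrite q_on_period by assumption. fold P b. field. }
  unfold pmean. rewrite Hsum.
  apply Rmult_le_reg_r with (2 * INR P * PI); [nra|].
  replace ((INR P / 2 - T / 2) / INR P * (2 * INR P * PI)) with (INR P * PI - T * PI)
    by (field; lra).
  replace ((1 / 2 - 1 / PI + 1 / (2 * INR P)) * (2 * INR P * PI))
    with (INR P * PI - 2 * INR P + PI) by (field; lra).
  assert (Hbp : b * INR P = PI) by (unfold b; field; lra).
  nra.
Qed.

Lemma walk_average_le P s m F : (1 <= P)%nat -> periodic P F ->
  (forall i, s i = 1 \/ s i = -1)%Z ->
  walk_sum s m F / 2 ^ m <= pmean P F + sqrt (rho P ^ m * pvar P F).
Proof.
  intros HP HF Hs. pose proof (walk_average_deviation P s m F HP HF Hs) as Hdev.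
  assert (walk_sum s m F / 2 ^ m - pmean P F <= sqrt (rho P ^ m * pvar P F)); [|lra].
  eapply Rle_trans; [apply Rle_abs|]. rewrite <- sqrt_Rsqr_abs.
  apply sqrt_le_1_alt. unfold Rsqr. simpl in Hdev. lra.
Qed.

Lemma length_all_bits m : length (all_bits m) = (2 ^ m)%nat.
Proof.
  induction m as [|m IH]; [reflexivity|]. cbn [all_bits].
  assert (Hlen : forall L : list (list bool),
    length (flat_map (fun l => (false :: l) :: (true :: l) :: nil) L) = (2 * length L)%nat).
  { induction L as [|l L IHL]; simpl; [reflexivity|]. rewrite IHL. lia. }
  rewrite Hlen, IH. simpl. lia.
Qed.

Lemma sumR_app a b : sumR (a ++ b) = sumR a + sumR b.
Proof. induction a as [|x a IH]; simpl; [ring|rewrite IH; ring]. Qed.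

Lemma sumR_flat_map_le {A} (f : A -> list R) L c :
  (forall d, sumR (f d) <= c) -> sumR (flat_map f L) <= INR (length L) * c.
Proof.
  intros Hf. induction L as [|d L IH]; simpl flat_map; [simpl; lra|].
  rewrite sumR_app. cbn [length]. rewrite S_INR. specialize (Hf d). lra.
Qed.

Lemma S_val_walk_pos n d x :
  S_val n d x = walk_pos (fun i => if h d i then (-1)%Z else 1%Z) (n - 1) x.
Proof. reflexivity. Qed.

Lemma expect_q_le_walk_bound P n : (1 <= P)%nat ->
  expect_q (Z.of_nat P) n
  <= pmean P (q (Z.of_nat P)) + sqrt (rho P ^ (n - 1) * pvar P (q (Z.of_nat P))).
Proof.
  intros HP. set (m := (n - 1)%nat). set (B := pmean P _ + sqrt _).
  assert (Hpow : 0 < 2 ^ m) by (apply pow_lt; lra).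
  assert (Hd : forall d, sumR (map (fun x => q (Z.of_nat P) (S_val n d x)) (all_bits m))
                         <= 2 ^ m * B).
  { intros d.
    assert (Hs : forall i, (if h d i then (-1)%Z else 1%Z) = 1%Z
                           \/ (if h d i then (-1)%Z else 1%Z) = (-1)%Z)
      by (intros i; destruct (h d i); auto).
    pose proof (walk_average_le P _ m _ HP (q_periodic P HP) Hs) as Hwalk.
    erewrite map_ext by (intros x; now rewrite S_val_walk_pos).
    apply Rmult_le_reg_r with (/ 2 ^ m); [now apply Rinv_0_lt_compat|].
    replace (2 ^ m * B * / 2 ^ m) with B by (field; lra). exact Hwalk. }
  unfold expect_q. fold m.
  pose proof (sumR_flat_map_le _ (all_bits m) _ Hd) as Hall.
  rewrite length_all_bits, pow_INR in Hall. replace (INR 2) with 2 in Hall by (simpl; lra).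
  apply Rmult_le_reg_r with (2 ^ m * 2 ^ m); [nra|].
  unfold Rdiv. rewrite Rmult_assoc, Rinv_l, Rmult_1_r by nra.
  eapply Rle_trans; [exact Hall|right; ring].
Qed.

Lemma exp_pow x m : exp x ^ m = exp (INR m * x).
Proof.
  induction m as [|m IH]; [simpl; now rewrite Rmult_0_l, exp_0|].
  rewrite <- tech_pow_Rmult, IH, S_INR, <- exp_plus. f_equal. ring.
Qed.

Lemma rho_pow_le_exp P m : (1 <= P)%nat -> rho P ^ m <= exp (- INR m / (2 * INR P ^ 2)).
Proof.
  intros HP. pose proof (INR_P_ge1 P HP).
  replace (- INR m / (2 * INR P ^ 2)) with (INR m * - (1 / (2 * INR P ^ 2))) by (field; nra).
  rewrite <- exp_pow. apply pow_incr. split; [now apply rho_nonneg|].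
  unfold rho. pose proof (exp_ineq1_le (- (1 / (2 * INR P ^ 2)))). lra.
Qed.

Lemma walk_error_le P n : (1 <= P)%nat -> (1 <= n)%nat ->
  sqrt (rho P ^ (n - 1) * INR P) <= 3 * INR P * sqrt (INR P) * exp (- INR n / (4 * INR P ^ 2)).
Proof.
  intros HP Hn. pose proof (INR_P_ge1 P HP).
  set (y := - INR n / (4 * INR P ^ 2)). set (a := 1 / (4 * INR P ^ 2)).
  assert (Hhalf : - INR (n - 1) / (2 * INR P ^ 2) = (y + a) + (y + a)).
  { unfold y, a. rewrite minus_INR by lia. simpl (INR 1). field. nra. }
  assert (Ha : exp a <= 3).
  { apply Rle_trans with (exp 1); [|apply exp_le_3].
    left. apply exp_increasing, Rle_lt_trans with (1 / 4); [|lra].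
    apply Rmult_le_compat_l, Rinv_le_contravar; nra. }
  eapply Rle_trans.
  { apply sqrt_le_1_alt, Rmult_le_compat_r; [apply pos_INR|now apply rho_pow_le_exp]. }
  rewrite Hhalf, exp_plus, sqrt_mult_alt, sqrt_square, exp_plus
    by (try apply Rmult_le_pos; left; apply exp_pos).
  pose proof (exp_pos y). pose proof (exp_pos a). pose proof (sqrt_pos (INR P)).
  assert (exp y * exp a <= 3 * INR P * exp y) by nra.
  nra.
Qed.

Lemma odd_prime_eq_double_succ p : prime p -> p <> 2%Z ->
  exists K, (1 <= K)%nat /\ p = Z.of_nat (2 * K + 1).
Proof.
  intros Hp Hp2. pose proof (prime_ge_2 p Hp).
  assert (Hodd : (p mod 2 <> 0)%Z).
  { intros H0. apply Zmod_divide in H0; [|lia].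
    destruct (prime_divisors p Hp 2 H0) as [?|[?|[?|?]]]; lia. }
  exists (Z.to_nat (p / 2)). pose proof (Z.div_mod p 2). pose proof (Z.mod_pos_bound p 2). lia.
Qed.

Theorem lemma6p6 :
  exists C : R, forall (p : Z) (n : nat),
    prime p -> p <> 2%Z -> (2 <= n)%nat ->
    expect_q p n <= 1/2 - 1/PI + 1/(2 * IZR p)
                    + C * (IZR p) * sqrt (IZR p) * exp (- (INR n) / (4 * (IZR p)^2)).
Proof.
  exists 3. intros p n Hp Hp2 Hn.
  destruct (odd_prime_eq_double_succ p Hp Hp2) as [K [HK ->]].
  pose proof (pmean_q_le K HK) as Hmean.
  set (P := (2 * K + 1)%nat) in *. assert (HP : (1 <= P)%nat) by lia.
  rewrite <- INR_IZR_INZ.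
  pose proof (expect_q_le_walk_bound P n HP) as Hwalk.
  pose proof (pvar_le_of_unit_interval P _ HP (q_range (Z.of_nat P))) as Hvar.
  pose proof (walk_error_le P n HP ltac:(lia)) as Herr.
  assert (sqrt (rho P ^ (n - 1) * pvar P (q (Z.of_nat P))) <= sqrt (rho P ^ (n - 1) * INR P)).
  { apply sqrt_le_1_alt, Rmult_le_compat_l; [apply pow_le, rho_nonneg|]; assumption. }
  lra.
Qed.
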